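(* Let $F$ be a vector lattice with positive cone $F_{+}$. Suppose we are given a rule (''adjudicator'') declaring, for some nets $(f_\alpha)$ in $F_{+}$, that $f_\alpha\to 0_F$, such that at least one net in $F_+$ is declared convergent to $0_F$ and such that: (1) every quasi-subnet of a net in $F_+$ converging to $0_F$ converges to $0_F$; (2) if $(f_{\alpha})_{\alpha\in A}\subset F_{+}$ converges to $0_{F}$ and $(g_\alpha)_{\alpha\in A}$ satisfies $0_{F}\le g_{\alpha}\le f_{\alpha}$ for every $\alpha\in A$, then $g_{\alpha}\to 0_{F}$; (3) if $f_{\alpha}\to 0_{F}$ and $g_{\alpha}\to 0_{F}$ (nets in $F_+$ over the same index set), then $f_{\alpha}+g_{\alpha}\to 0_{F}$. Define, for a net $(f_\alpha)$ in $F$ and $f\in F$, $f_{\alpha}\to f$ iff $|f_{\alpha}-f|\to 0_{F}$. Then this is a locally solid additive convergence structure on $F$. Moreover, it is a locally solid linear convergence if and only if the sequence $\left(\frac{1}{n}f\right)_{n\in\mathbb N}$ converges to $0_{F}$ for every $f\in F_{+}$.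
   Context: A net $(y_\beta)_{\beta\in B}$ is a quasi-subnet of a net $(x_\alpha)_{\alpha\in A}$ if for every $\alpha_0\in A$ there is $\beta_0\in B$ with $\{y_\beta\}_{\beta\ge\beta_0}\subset\{x_\alpha\}_{\alpha\ge\alpha_0}$. A (net) convergence structure on a set $X$ is a rule deciding which nets converge to which points such that: every constant net converges to its value; every quasi-subnet of a net converging to $x$ converges to $x$; if $x_\alpha\to x$, $y_\alpha\to x$ and $z_\alpha\in\{x_\alpha,y_\alpha\}$ for every $\alpha$, then $z_\alpha\to x$. Continuity of a map means it sends convergent nets to nets converging to the image of the limit; on products, $(x_\alpha,y_\alpha)\to(x,y)$ iff $x_\alpha\to x$ and $y_\alpha\to y$. A convergence structure on a vector lattice $F$ is locally solid additive if addition $F\times F\to F$ and $f\mapsto -f$ are continuous and whenever $|e_\alpha|\le|f_\alpha|$ for all $\alpha$ and $f_\alpha\to 0_F$, then $e_\alpha\to0_F$. It is locally solid linear if moreover scalar multiplication $F\times\mathbb R\to F$ is continuous (with the usual convergence on $\mathbb R$). *)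

From HB Require Import structures.
From mathcomp Require Import all_boot all_order all_algebra.
From mathcomp Require Import reals.
Set Implicit Arguments. Unset Strict Implicit. Unset Printing Implicit Defensive.
Import Order.TTheory GRing.Theory Num.Theory.
Local Open Scope ring_scope.

Record dirset := DirSet {
  dcar :> Type;
  dle : dcar -> dcar -> Prop;
  dle_refl : forall a, dle a a;
  dle_trans : forall a b c, dle a b -> dle b c -> dle a c;
  dle_dir : forall a b, exists c, dle a c /\ dle b c;
  dne : inhabited dcar }.

Lemma nat_dir (a b : nat) : exists c, (a <= c)%N /\ (b <= c)%N.
Proof. exists (maxn a b); split; [exact: leq_maxl | exact: leq_maxr]. Qed.
Definition natdir : dirset :=
  @DirSet nat (fun a b => is_true (a <= b)%N) leqnn
    (fun a b c h1 h2 => leq_trans h1 h2) nat_dir (inhabits 0%N).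

Definition quasi_subnet (X : Type) (A B : dirset) (y : B -> X) (x : A -> X) :=
  forall a0 : A, exists b0 : B, forall b : B, dle b0 b ->
    exists a : A, dle a0 a /\ y b = x a.

(* A (net) convergence relation on X: conv A x l means x -> l. *)
Definition convergence (X : Type) := forall A : dirset, (A -> X) -> X -> Prop.

Definition is_convergence_structure (X : Type) (conv : convergence X) :=
  [/\ (forall (A : dirset) (l : X), conv A (fun _ => l) l),
      (forall (A B : dirset) (x : A -> X) (y : B -> X) (l : X),
          conv A x l -> quasi_subnet y x -> conv B y l) &
      (forall (A : dirset) (x y z : A -> X) (l : X),
          conv A x l -> conv A y l -> (forall a, z a = x a \/ z a = y a) ->
          conv A z l)].

Record vector_lattice (R : realType) (F : lmodType R)
    (le : F -> F -> Prop) (join : F -> F -> F) : Prop := {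
  vl_refl : forall x, le x x;
  vl_trans : forall x y z, le x y -> le y z -> le x z;
  vl_antisym : forall x y, le x y -> le y x -> x = y;
  vl_add : forall x y z, le x y -> le (x + z) (y + z);
  vl_scale : forall (t : R) x, 0 <= t -> le 0 x -> le 0 (t *: x);
  vl_join_ubl : forall x y, le x (join x y);
  vl_join_ubr : forall x y, le y (join x y);
  vl_join_least : forall x y z, le x z -> le y z -> le (join x y) z }.

Definition vabs (R : realType) (F : lmodType R) (join : F -> F -> F) (f : F) :=
  join f (- f).

Definition Rconv (R : realType) (A : dirset) (t : A -> R) (t0 : R) :=
  forall eps : R, 0 < eps -> exists a0 : A, forall a : A, dle a0 a ->
    `|t a - t0| < eps.

Definition locally_solid_additive (R : realType) (F : lmodType R)
    (le : F -> F -> Prop) (join : F -> F -> F) (conv : convergence F) :=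
  [/\ (forall (A : dirset) (x y : A -> F) (f g : F),
         conv A x f -> conv A y g -> conv A (fun a => x a + y a) (f + g)),
      (forall (A : dirset) (x : A -> F) (f : F),
         conv A x f -> conv A (fun a => - x a) (- f)) &
      (forall (A : dirset) (e f : A -> F),
         (forall a, le (vabs join (e a)) (vabs join (f a))) ->
         conv A f 0 -> conv A e 0)].

Definition locally_solid_linear (R : realType) (F : lmodType R)
    (le : F -> F -> Prop) (join : F -> F -> F) (conv : convergence F) :=
  locally_solid_additive le join conv /\
  (forall (A : dirset) (x : A -> F) (t : A -> R) (f : F) (t0 : R),
     conv A x f -> Rconv t t0 -> conv A (fun a => t a *: x a) (t0 *: f)).

Definition induced_conv (R : realType) (F : lmodType R) (join : F -> F -> F)
    (adj : forall A : dirset, (A -> F) -> Prop) : convergence F :=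
  fun A x f => adj A (fun a => vabs join (x a - f)).
Arguments induced_conv {R F} join adj A x f.

(* Translating by the limit and the triangle inequality
   [|x_a + y_a - (f + g)| <= |x_a - f| + |y_a - g|] reduce the axioms of a locally
   solid additive convergence to properties (1)-(3) of the adjudicator.
   For scalar multiplication, [t_a x_a - t f = t_a (x_a - f) + (t_a - t) f]: the
   first term is dominated by [N |x_a - f|] because [t_a] is eventually bounded,
   and [|t_a - t| |f|] is eventually dominated by a quasi-subnet of [(1/n) |f|].
   Conversely, [(1/n) f -> 0] is continuity of scalar multiplication applied to
   [1/n -> 0] and the constant net [f]. *)

From Pilot Require Import Defs.
From mathcomp Require Import all_boot all_order all_algebra.
From mathcomp Require Import reals.
From Stdlib Require Import ClassicalEpsilon.
Set Implicit Arguments. Unset Strict Implicit.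
Import Order.TTheory GRing.Theory Num.Theory.
Local Open Scope ring_scope.

Section VectorLattice.
Variables (R : realType) (F : lmodType R) (le : F -> F -> Prop) (join : F -> F -> F).
Hypothesis VL : vector_lattice le join.
Local Notation vabs := (vabs join).

Lemma vl_leD a b c d : le a b -> le c d -> le (a + c) (b + d).
Proof.
move=> le_ab le_cd; apply: (vl_trans VL (vl_add VL c le_ab)).
by rewrite ![b + _]addrC; apply: (vl_add VL).
Qed.

Lemma vl_subr_ge0 a b : le 0 (b - a) <-> le a b.
Proof.
split=> [|le_ab]; first by move/(vl_add VL a); rewrite add0r subrK.
by have := vl_add VL (- a) le_ab; rewrite subrr.
Qed.

Lemma vl_leN2 a b : le a b -> le (- b) (- a).
Proof. by move=> /vl_subr_ge0 ?; apply/vl_subr_ge0; rewrite opprK addrC. Qed.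

Lemma vl_leZ2l t u v : 0 <= t -> le u v -> le (t *: u) (t *: v).
Proof.
move=> t_ge0 /vl_subr_ge0 le_uv; apply/vl_subr_ge0.
by rewrite -scalerBr; apply: (vl_scale VL).
Qed.

Lemma vl_leZ2r s t v : s <= t -> le 0 v -> le (s *: v) (t *: v).
Proof.
move=> le_st v_ge0; apply/vl_subr_ge0.
by rewrite -scalerBl; apply: (vl_scale VL); rewrite ?subr_ge0.
Qed.

Lemma vabs_ge u : le u (vabs u). Proof. exact: (vl_join_ubl VL). Qed.

Lemma vabs_geN u : le (- u) (vabs u). Proof. exact: (vl_join_ubr VL). Qed.

(* [0 <= |u| + |u|] from [u <= |u|] and [-u <= |u|]; then halve. *)
Lemma vabs_ge0 u : le 0 (vabs u).
Proof.
have := vl_leD (vabs_ge u) (vabs_geN u); rewrite subrr.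
have half_ge0 : 0 <= (2 : R)^-1 by rewrite invr_ge0 ler0n.
move/(vl_scale VL half_ge0).
by rewrite -[X in X + X]scale1r -scalerDl scalerA mulVf ?pnatr_eq0 ?scale1r.
Qed.

Lemma ger0_vabs v : le 0 v -> vabs v = v.
Proof.
move=> v_ge0; apply: (vl_antisym VL); last exact: vabs_ge.
apply: (vl_join_least VL); first exact: (vl_refl VL).
by apply: (vl_trans VL _ v_ge0); rewrite -oppr0; apply: vl_leN2.
Qed.

Lemma vabs0 : vabs 0 = 0. Proof. exact/ger0_vabs/(vl_refl VL). Qed.

Lemma vl_joinC u v : join u v = join v u.
Proof.
suff le_join x y : le (join x y) (join y x) by apply: (vl_antisym VL).
by apply: (vl_join_least VL); [exact: (vl_join_ubr VL) | exact: (vl_join_ubl VL)].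
Qed.

Lemma vabsN u : vabs (- u) = vabs u.
Proof. by rewrite /Defs.vabs opprK vl_joinC. Qed.

Lemma vabs_leD u v : le (vabs (u + v)) (vabs u + vabs v).
Proof.
apply: (vl_join_least VL); first exact: vl_leD (vabs_ge u) (vabs_ge v).
by rewrite opprD; apply: vl_leD (vabs_geN u) (vabs_geN v).
Qed.

Lemma vabs_leZ t u : le (vabs (t *: u)) (`|t| *: vabs u).
Proof.
have [t_ge0|t_lt0] := leP 0 t.
  rewrite ger0_norm //; apply: (vl_join_least VL); first exact: vl_leZ2l (vabs_ge u).
  by rewrite -scalerN; apply: vl_leZ2l (vabs_geN u).
have Nt_ge0 : 0 <= - t by rewrite oppr_ge0 ltW.
rewrite ltr0_norm //; apply: (vl_join_least VL).
  by rewrite -[t *: u]opprK -scalerN -scaleNr; apply: vl_leZ2l (vabs_geN u).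
by rewrite -scaleNr; apply: vl_leZ2l (vabs_ge u).
Qed.

End VectorLattice.

Section ProdDirset.
Variables A B : dirset.

Definition prod_dle (p q : A * B) := dle p.1 q.1 /\ dle p.2 q.2.

Lemma prod_dle_refl p : prod_dle p p.
Proof. by split; apply: dle_refl. Qed.

Lemma prod_dle_trans p q r : prod_dle p q -> prod_dle q r -> prod_dle p r.
Proof.
by move=> [pq1 pq2] [qr1 qr2]; split; [exact: dle_trans pq1 qr1 | exact: dle_trans pq2 qr2].
Qed.

Lemma prod_dle_dir p q : exists r, prod_dle p r /\ prod_dle q r.
Proof.
have [r1 [pr1 qr1]] := dle_dir p.1 q.1; have [r2 [pr2 qr2]] := dle_dir p.2 q.2.
by exists (r1, r2).
Qed.

Lemma prod_inhabited : inhabited (A * B).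
Proof. by case: (dne A) => a; case: (dne B) => b; exists. Qed.

Definition prod_dirset : dirset :=
  DirSet prod_dle_refl prod_dle_trans prod_dle_dir prod_inhabited.

End ProdDirset.

Lemma Rconv_invSn (R : realType) :
  Rconv (A := natdir) (fun n => (n.+1%:R)^-1 : R) 0.
Proof.
move=> eps eps_gt0; exists (Num.truncn eps^-1) => n /= le_n.
rewrite subr0 ger0_norm ?invr_ge0 // invf_plt ?posrE ?ltr0Sn //.
by apply: lt_le_trans (truncnS_gt _) _; rewrite ler_nat ltnS.
Qed.

Lemma Rconv_bounded (R : realType) (A : dirset) (t : A -> R) t0 :
  Rconv t t0 -> exists a1 (N : nat), forall a, dle a1 a -> `|t a| <= N%:R.
Proof.
move=> /(_ 1 ltr01) [a1 near_t0]; exists a1, (Num.truncn (`|t0| + 1)).+1.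
move=> a /near_t0 lt_dist; apply/ltW/(le_lt_trans _ (truncnS_gt _)).
by rewrite -[t a](subrK t0) (le_trans (ler_normD _ _)) // addrC lerD2l ltW.
Qed.

Lemma truncn_invf_gt (R : realType) (x : R) n :
  0 < x -> x < (n.+1%:R)^-1 -> (n < Num.truncn x^-1)%N.
Proof.
move=> x_gt0; rewrite invf_pgt ?posrE ?ltr0Sn // => lt_n.
by rewrite truncn_ge_nat ?invr_ge0 ?ltW.
Qed.

Lemma le_inv_truncn_invf (R : realType) (x : R) :
  0 < x -> x <= 1 -> x <= ((Num.truncn x^-1)%:R)^-1.
Proof.
move=> x_gt0 x_le1; have t_gt0 : (0 < Num.truncn x^-1)%N.
  by rewrite truncn_gt0 invf_ge1.
by rewrite invf_pge ?posrE ?ltr0n // truncn_le invr_ge0 ltW.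
Qed.

Section Adjudicator.
Variables (R : realType) (F : lmodType R) (le : F -> F -> Prop) (join : F -> F -> F).
Hypothesis VL : vector_lattice le join.
Local Notation vabs := (vabs join).
Variable adj : forall A : dirset, (A -> F) -> Prop.
Hypothesis adj_ge0 : forall (A : dirset) (f : A -> F), adj f -> forall a, le 0 (f a).
Hypothesis adj_exists : exists (A : dirset) (f : A -> F), adj f.
Hypothesis adj_quasi_subnet : forall (A B : dirset) (f : A -> F) (g : B -> F),
  adj f -> (forall b, le 0 (g b)) -> quasi_subnet g f -> adj g.
Hypothesis adj_dom : forall (A : dirset) (f g : A -> F),
  adj f -> (forall a, le 0 (g a) /\ le (g a) (f a)) -> adj g.
Hypothesis adj_add : forall (A : dirset) (f g : A -> F),
  adj f -> adj g -> adj (fun a => f a + g a).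

Lemma adj_le (A : dirset) (f g : A -> F) :
  adj f -> (forall a, le 0 (g a)) -> (forall a, le (g a) (f a)) -> adj g.
Proof. by move=> adj_f g_ge0 le_gf; apply: (adj_dom adj_f). Qed.

Lemma adj_ext (A : dirset) (f g : A -> F) : adj f -> (forall a, g a = f a) -> adj g.
Proof.
move=> adj_f eq_gf; apply: (adj_le adj_f) => a; rewrite eq_gf.
  exact: adj_ge0 adj_f a.
exact: (vl_refl VL).
Qed.

Lemma adj_cst0 (A : dirset) : adj (fun _ : A => 0).
Proof.
have [B [f adj_f]] := adj_exists.
have adj0 : adj (fun _ : B => 0).
  by apply: (adj_le adj_f) => b; [exact: (vl_refl VL) | exact: adj_ge0 adj_f b].
apply: (adj_quasi_subnet adj0) => [a|b0]; first exact: (vl_refl VL).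
by case: (dne A) => a; exists a => a' _; exists b0; split=> //; apply: dle_refl.
Qed.

(* Cut [g] down to [0] before [a1]: the result is dominated by [f] and has the
   same tails as [g]. *)
Lemma adj_eventually_le (A : dirset) (f g : A -> F) (a1 : A) :
  adj f -> (forall a, le 0 (g a)) -> (forall a, dle a1 a -> le (g a) (f a)) ->
  adj g.
Proof.
move=> adj_f g_ge0 le_gf.
pose h a := if excluded_middle_informative (dle a1 a) then g a else 0.
have adj_h : adj h.
  apply: (adj_le adj_f) => a; rewrite /h;
    case: excluded_middle_informative => [a1a|_] /=.
  - exact: g_ge0.
  - exact: (vl_refl VL).
  - exact: le_gf.
  - exact: adj_ge0 adj_f a.
apply: (adj_quasi_subnet adj_h g_ge0) => a0.
have [c [a0c a1c]] := dle_dir a0 a1; exists c => a ca; exists a.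
split; first exact: dle_trans a0c ca.
by rewrite /h; case: excluded_middle_informative => // -[]; apply: dle_trans a1c ca.
Qed.

Lemma adj_muln (A : dirset) (f : A -> F) n : adj f -> adj (fun a => f a *+ n).
Proof.
move=> adj_f; elim: n => [|n adj_fn].
  by apply: adj_ext (adj_cst0 A) _ => a; rewrite mulr0n.
by apply: adj_ext (adj_add adj_f adj_fn) _ => a; rewrite mulrS.
Qed.

Lemma adj_comp_unbounded (s : natdir -> F) (B : dirset) (k : B -> nat) :
  adj s -> (forall n0, exists b0, forall b, dle b0 b -> (n0 <= k b)%N) ->
  adj (fun b => s (k b)).
Proof.
move=> adj_s k_unbounded; apply: (adj_quasi_subnet adj_s) => [b|n0].
  exact: adj_ge0 adj_s (k b).
by have [b0 le_k] := k_unbounded n0; exists b0 => b /le_k; exists (k b).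
Qed.

Lemma adj_prod_fst (A B : dirset) (f : A -> F) :
  adj (fun p : prod_dirset A B => f p.1) -> adj f.
Proof.
move=> adj_f; have [b0] := dne B.
apply: (adj_quasi_subnet adj_f) => [a|[a0 b1]].
  exact: adj_ge0 adj_f (a, b0).
by exists a0 => a a0a; exists (a, b1); split=> //; split=> //; apply: dle_refl.
Qed.

Local Notation conv := (induced_conv join adj).

Lemma induced_conv_structure : is_convergence_structure conv.
Proof.
split.
- by move=> A l; apply: adj_ext (adj_cst0 A) _ => a; rewrite subrr (vabs0 VL).
- move=> A B x y l conv_x qs_yx; apply: (adj_quasi_subnet conv_x) => [b|a0].
    exact: vabs_ge0.
  have [b0 tail_y] := qs_yx a0; exists b0 => b /tail_y [a [a0a ->]].
  by exists a.
- move=> A x y z l conv_x conv_y z_xy.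
  apply: (adj_le (adj_add conv_x conv_y)) => a; first exact: vabs_ge0.
  have [x_ge0 y_ge0] := (vabs_ge0 VL (x a - l), vabs_ge0 VL (y a - l)).
  case: (z_xy a) => ->.
    by rewrite -{1}[vabs _]addr0; apply: (vl_leD VL (vl_refl VL _) y_ge0).
  by rewrite -{1}[vabs _]add0r; apply: (vl_leD VL x_ge0 (vl_refl VL _)).
Qed.

Lemma induced_conv_locally_solid_additive : locally_solid_additive le join conv.
Proof.
split.
- move=> A x y f g conv_x conv_y.
  apply: (adj_le (adj_add conv_x conv_y)) => a; first exact: vabs_ge0.
  by rewrite opprD addrACA; apply: vabs_leD.
- by move=> A x f conv_x; apply: adj_ext conv_x _ => a; rewrite -opprD (vabsN VL).
- move=> A e f le_ef conv_f; apply: (adj_le conv_f) => a; first exact: vabs_ge0.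
  by rewrite !subr0.
Qed.

Lemma locally_solid_linear_invSn_null : locally_solid_linear le join conv ->
  forall f, conv natdir (fun n => (n.+1%:R)^-1 *: f) 0.
Proof.
move=> [_ scale_cont] f; have [cst_conv _ _] := induced_conv_structure.
by have := scale_cont _ _ _ _ _ (cst_conv natdir f) (@Rconv_invSn R); rewrite scale0r.
Qed.

Hypothesis invSn_null : forall f, le 0 f -> conv natdir (fun n => (n.+1%:R)^-1 *: f) 0.

(* Compare [d a] with [1/(k+1)], where [k = floor (1 / d a) - 1]; the second
   coordinate of the index keeps [k] unbounded where [d a = 0]. *)
Lemma adj_scale_null (A : dirset) (d : A -> R) u :
  le 0 u -> Rconv d 0 -> (forall a, 0 <= d a) -> adj (fun a => d a *: u).
Proof.
move=> u_ge0 d_null d_ge0.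
have d_gt0 a : d a != 0 -> 0 < d a by rewrite lt_def => ->; apply: d_ge0.
have invSn_ge0 n : le 0 ((n.+1%:R)^-1 *: u).
  by apply: (vl_scale VL); rewrite ?invr_ge0.
have adj_invSn : adj (fun n : natdir => (n.+1%:R)^-1 *: u).
  by apply: (adj_ext (invSn_null u_ge0)) => n; rewrite subr0 (ger0_vabs VL).
pose k (p : prod_dirset A natdir) :=
  if d p.1 == 0 then p.2 else (Num.truncn (d p.1)^-1).-1.
have k_unbounded n0 : exists p0, forall p, dle p0 p -> (n0 <= k p)%N.
  have eps_gt0 : 0 < (n0.+1%:R : R)^-1 by rewrite invr_gt0.
  have [a0 near0] := d_null _ eps_gt0.
  exists (a0, n0) => -[a m] [/= a0a n0m]; rewrite /k /=.
  case: eqP => [//|/eqP/d_gt0 da_gt0].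
  have := near0 a a0a; rewrite subr0 ger0_norm ?ltW // => /(truncn_invf_gt da_gt0).
  by case: (Num.truncn _).
have [a1 near0] := d_null 1 ltr01.
apply: (adj_prod_fst (B := natdir)) => /=.
apply: (adj_eventually_le (adj_comp_unbounded adj_invSn k_unbounded)
         (a1 := (a1, 0%N) : prod_dirset A natdir)).
  by move=> p; apply: (vl_scale VL).
move=> [a m] [/= a1a _]; rewrite /k /=; case: eqP => [->|/eqP/d_gt0 da_gt0].
  by rewrite scale0r.
have := near0 a a1a; rewrite subr0 ger0_norm ?ltW // => da_lt1.
apply: (vl_leZ2r VL) => //.
rewrite prednK ?le_inv_truncn_invf ?ltW //.
by apply: (truncn_invf_gt (n := 0)); rewrite ?invr1.
Qed.

(* [t a x a - t0 f = t a (x a - f) + (t a - t0) f], and [t] is eventually bounded. *)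
Lemma induced_conv_locally_solid_linear : locally_solid_linear le join conv.
Proof.
split; first exact: induced_conv_locally_solid_additive.
move=> A x t f t0 conv_x conv_t.
have [a1 [N t_bounded]] := Rconv_bounded conv_t.
have dist_null : Rconv (fun a => `|t a - t0|) 0.
  by move=> e /conv_t [a0 near_t0]; exists a0 => a /near_t0; rewrite subr0 normr_id.
have adj_bound := adj_add (adj_muln N conv_x)
  (adj_scale_null (vabs_ge0 VL f) dist_null (fun a => normr_ge0 _)).
apply: (adj_eventually_le adj_bound (a1 := a1)) => [a|a a1a].
  exact: vabs_ge0.
have -> : t a *: x a - t0 *: f = t a *: (x a - f) + (t a - t0) *: f.
  by rewrite scalerBr scalerBl addrA subrK.
apply: (vl_trans VL (vabs_leD VL _ _)); apply: (vl_leD VL); last exact: vabs_leZ.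
apply: (vl_trans VL (vabs_leZ VL _ _)); rewrite -scaler_nat.
exact: (vl_leZ2r VL (t_bounded a a1a) (vabs_ge0 VL _)).
Qed.

End Adjudicator.

Theorem theorem2p1 (R : realType) (F : lmodType R)
    (le : F -> F -> Prop) (join : F -> F -> F)
    (adj : forall A : dirset, (A -> F) -> Prop) :
  vector_lattice le join ->
  (* the adjudicator only declares nets in F_+ *)
  (forall (A : dirset) (f : A -> F), adj A f -> forall a, le 0 (f a)) ->
  (exists (A : dirset) (f : A -> F), adj A f) ->
  (forall (A B : dirset) (f : A -> F) (g : B -> F),
      adj A f -> (forall b, le 0 (g b)) -> quasi_subnet g f -> adj B g) ->
  (forall (A : dirset) (f g : A -> F),
      adj A f -> (forall a, le 0 (g a) /\ le (g a) (f a)) -> adj A g) ->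
  (forall (A : dirset) (f g : A -> F),
      adj A f -> adj A g -> adj A (fun a => f a + g a)) ->
  [/\ is_convergence_structure (induced_conv join adj),
      locally_solid_additive le join (induced_conv join adj) &
      (locally_solid_linear le join (induced_conv join adj) <->
       (forall f : F, le 0 f ->
          induced_conv join adj natdir (fun n : nat => (n.+1%:R)^-1 *: f) 0))].
Proof.
move=> VL adj_ge0 adj_exists adj_quasi_subnet adj_dom adj_add.
split.
- exact: (induced_conv_structure VL adj_ge0 adj_exists).
- exact: (induced_conv_locally_solid_additive VL adj_ge0 adj_dom adj_add).
- split=> [linear f _|invSn_null].
    exact: (locally_solid_linear_invSn_null VL adj_ge0 adj_exists
      adj_quasi_subnet adj_dom adj_add linear).
  exact: (induced_conv_locally_solid_linear VL adj_ge0 adj_exists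
    adj_quasi_subnet adj_dom adj_add invSn_null).
Qed.
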